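(* Let $\mathcal{P}$ be a parametrised propositional logic program over a finite alphabet $\Sigma=\Sigma_p\cup\Sigma_d$. Then (1) $\Psi_{\mathcal{P}}$ is an approximator of $\mathcal{T}_{\mathcal{P}}$; and (2) for every $\Sigma_p$-interpretation $I$, $\Psi^I_{\mathcal{P}}\circ\pi_I^2=\pi_I^2\circ\Psi_{\mathcal{P}}$.
   Context: A parametrised logic program is a finite set of rules $h\leftarrow l_1\wedge\dots\wedge l_n$ with $h\in\Sigma_d$ and each $l_i$ an atom of $\Sigma$ or its negation. For $q\in\Sigma_d$, $\varphi_q$ is the disjunction of the bodies of the rules with head $q$. $L_p$: equivalence classes $\overline\varphi$ of propositional formulas over $\Sigma_p$ ordered by entailment; $L^d_p$: maps $\Sigma_d\to L_p$ ordered pointwise. For $\mathcal{S}=(\mathcal{A}_t,\mathcal{A}_p)\in(L^d_p)^2$, $\varphi^{\mathcal{S}}\in L_p^2$ is defined by: $q^{\mathcal{S}}=(\overline q,\overline q)$ for $q\in\Sigma_p$; $q^{\mathcal{S}}=(\mathcal{A}_t(q),\mathcal{A}_p(q))$ for $q\in\Sigma_d$; $\wedge,\vee$ componentwise; $(\neg\psi)^{\mathcal{S}}=(\overline{\neg\psi_p},\overline{\neg\psi_t})$ when $\psi^{\mathcal{S}}=(\overline{\psi_t},\overline{\psi_p})$. $\Psi_{\mathcal{P}}:(L^d_p)^2\to(L^d_p)^2$ is given by $\Psi_{\mathcal{P}}(\mathcal{S})(q)=\varphi_q^{\mathcal{S}}$ (read componentwise), and $\mathcal{T}_{\mathcal{P}}:L^d_p\to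 L^d_p$ by $\mathcal{T}_{\mathcal{P}}(\mathcal{A})(q)=$ the common component of $\varphi_q^{(\mathcal{A},\mathcal{A})}$. An approximator of an operator $O$ on a complete lattice $L$ is a $\leq_p$-monotone $A:L^2\to L^2$ (precision order $(x,y)\leq_p(u,v)$ iff $x\leq u,v\leq y$) with $A(x,x)_1\leq O(x)\leq A(x,x)_2$. For $I\in 2^{\Sigma_p}$, $\pi_I:L^d_p\to 2^{\Sigma_d}$ maps $\mathcal{A}$ to $\{a\mid\mathcal{A}(a)\text{ is true in }I\}$ and $\pi_I^2(\mathcal{A}_1,\mathcal{A}_2)=(\pi_I(\mathcal{A}_1),\pi_I(\mathcal{A}_2))$. $\Psi^I_{\mathcal{P}}$ is Fitting's operator on pairs $(J_1,J_2)$ of $\Sigma_d$-interpretations with $\Sigma_p$ fixed to $I$: $\Psi^I_{\mathcal{P}}(J_1,J_2)_1=\{q\mid$ some rule body for $q$ is true in Kleene three-valued evaluation$\}$, $\Psi^I_{\mathcal{P}}(J_1,J_2)_2=\{q\mid$ some rule body for $q$ is not false$\}$ (for general pairs the same evaluation with negation swapping and negating the two components). *)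

From mathcomp Require Import all_boot.
Set Implicit Arguments. Unset Strict Implicit. Unset Printing Implicit Defensive.

(* Alphabet: Sigma = Sigma_p + Sigma_d, with P = Sigma_p (parameters) and
   D = Sigma_d (defined atoms), both finite.  An atom is an element of P + D. *)

Definition interp (P : finType) := {ffun P -> bool}.

(* L_p : classes of propositional formulas over Sigma_p modulo equivalence,
   represented by their sets of models (Lindenbaum algebra); entailment is
   set inclusion, /\ is intersection, \/ is union, negation is complement. *)
Definition Lp (P : finType) := {set {ffun P -> bool}}.

(* literal = (polarity, atom): polarity true = positive atom, false = negated *)
Definition literal (P D : finType) := (bool * (P + D))%type.
Definition rule (P D : finType) := (D * seq (literal P D))%type.
Definition program (P D : finType) := seq (rule P D).

Definition atomLp (P : finType) (p : P) : Lp P := [set v : {ffun P -> bool} | v p].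

Definition atom_pair (P D : finType) (S : (D -> Lp P) * (D -> Lp P)) (a : P + D)
  : Lp P * Lp P :=
  match a with inl p => (atomLp p, atomLp p) | inr d => (S.1 d, S.2 d) end.

Definition lit_pair (P D : finType) (S : (D -> Lp P) * (D -> Lp P))
  (l : literal P D) : Lp P * Lp P :=
  let x := atom_pair S l.2 in if l.1 then x else (~: x.2, ~: x.1).

Definition body_pair (P D : finType) (S : (D -> Lp P) * (D -> Lp P))
  (b : seq (literal P D)) : Lp P * Lp P :=
  (\bigcap_(l <- b) (lit_pair S l).1, \bigcap_(l <- b) (lit_pair S l).2).

Definition phi_pair (P D : finType) (prog : program P D)
  (S : (D -> Lp P) * (D -> Lp P)) (q : D) : Lp P * Lp P :=
  (\bigcup_(r <- prog | r.1 == q) (body_pair S r.2).1,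
   \bigcup_(r <- prog | r.1 == q) (body_pair S r.2).2).

Definition Psi (P D : finType) (prog : program P D)
  (S : (D -> Lp P) * (D -> Lp P)) : (D -> Lp P) * (D -> Lp P) :=
  (fun q => (phi_pair prog S q).1, fun q => (phi_pair prog S q).2).

Definition atom1 (P D : finType) (A : D -> Lp P) (a : P + D) : Lp P :=
  match a with inl p => atomLp p | inr d => A d end.
Definition lit1 (P D : finType) (A : D -> Lp P) (l : literal P D) : Lp P :=
  if l.1 then atom1 A l.2 else ~: atom1 A l.2.
Definition body1 (P D : finType) (A : D -> Lp P) (b : seq (literal P D)) : Lp P :=
  \bigcap_(l <- b) lit1 A l.
Definition TP (P D : finType) (prog : program P D) (A : D -> Lp P) : D -> Lp P :=
  fun q => \bigcup_(r <- prog | r.1 == q) body1 A r.2.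

Definition leL (P D : finType) (A B : D -> Lp P) : Prop :=
  forall d, A d \subset B d.

Definition approximator (X : Type) (le : X -> X -> Prop)
  (Aop : X * X -> X * X) (O : X -> X) : Prop :=
  (forall x y u v : X, le x u -> le v y ->
      le (Aop (x, y)).1 (Aop (u, v)).1 /\ le (Aop (u, v)).2 (Aop (x, y)).2) /\
  (forall x : X, le (Aop (x, x)).1 (O x) /\ le (O x) (Aop (x, x)).2).

Definition piI (P D : finType) (I : {ffun P -> bool}) (A : D -> Lp P) : {set D} :=
  [set a | I \in A a].
Definition piI2 (P D : finType) (I : {ffun P -> bool})
  (S : (D -> Lp P) * (D -> Lp P)) : {set D} * {set D} :=
  (piI I S.1, piI I S.2).

Definition atomI (P D : finType) (I : {ffun P -> bool}) (J : {set D} * {set D})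
  (a : P + D) : bool * bool :=
  match a with inl p => (I p, I p) | inr d => (d \in J.1, d \in J.2) end.
Definition litI (P D : finType) (I : {ffun P -> bool}) (J : {set D} * {set D})
  (l : literal P D) : bool * bool :=
  let x := atomI I J l.2 in if l.1 then x else (~~ x.2, ~~ x.1).
Definition bodyI (P D : finType) (I : {ffun P -> bool}) (J : {set D} * {set D})
  (b : seq (literal P D)) : bool * bool :=
  (all (fun l => (litI I J l).1) b, all (fun l => (litI I J l).2) b).
Definition PsiI (P D : finType) (prog : program P D) (I : {ffun P -> bool})
  (J : {set D} * {set D}) : {set D} * {set D} :=
  ([set q | has (fun r : rule P D => (r.1 == q) && (bodyI I J r.2).1) prog],
   [set q | has (fun r : rule P D => (r.1 == q) && (bodyI I J r.2).2) prog]).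

From mathcomp Require Import all_boot.
Set Implicit Arguments. Unset Strict Implicit. Unset Printing Implicit Defensive.

(* Both parts are proved literal by literal and then lifted through the
   conjunctions and disjunctions of the rule bodies.  For (1), a positive
   literal is monotone in each component, while a negated one swaps and
   complements the components, so it is monotone for the precision order as
   well; on a diagonal pair both components are the class of the literal
   under A, so Psi_P restricts to T_P on the diagonal.  For (2), the truth of a set of models at I
   commutes with complement, intersection and union, i.e. with the Kleene
   connectives on the projected pair. *)

Section SetsOverSeq.
Variables (T : finType) (I : Type).

Lemma mem_bigcap_seq (x : T) (r : seq I) (F : I -> {set T}) :
  (x \in \bigcap_(i <- r) F i) = all (fun i => x \in F i) r.
Proof. by rewrite -big_all (big_morph _ (in_setI x) (in_setT x)). Qed.

Lemma mem_bigcup_seq (x : T) (r : seq I) (p : pred I) (F : I -> {set T}) :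
  (x \in \bigcup_(i <- r | p i) F i) = has (fun i => p i && (x \in F i)) r.
Proof. by rewrite -big_has_cond (big_morph _ (in_setU x) (in_set0 x)). Qed.

Lemma bigcap_seq_subset (r : seq I) (F G : I -> {set T}) :
  (forall i, F i \subset G i) ->
  \bigcap_(i <- r) F i \subset \bigcap_(i <- r) G i.
Proof.
by move=> FG; apply: (big_ind2 (fun A B : {set T} => A \subset B)) => // *;
  apply: setISS.
Qed.

Lemma bigcup_seq_subset (r : seq I) (p : pred I) (F G : I -> {set T}) :
  (forall i, F i \subset G i) ->
  \bigcup_(i <- r | p i) F i \subset \bigcup_(i <- r | p i) G i.
Proof.
by move=> FG; apply: (big_ind2 (fun A B : {set T} => A \subset B)) => // *;
  apply: setUSS.
Qed.

End SetsOverSeq.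

Section ParametrisedProgram.
Variables (P D : finType) (prog : program P D).

Lemma lit_pair_precision_monotone (l : literal P D) (x y u v : D -> Lp P) :
  leL x u -> leL v y ->
  (lit_pair (x, y) l).1 \subset (lit_pair (u, v) l).1 /\
  (lit_pair (u, v) l).2 \subset (lit_pair (x, y) l).2.
Proof.
by move=> xu vy; case: l => [[] [p|d]]; rewrite /lit_pair /= ?subxx ?setCS.
Qed.

Lemma Psi_precision_monotone (x y u v : D -> Lp P) :
  leL x u -> leL v y ->
  leL (Psi prog (x, y)).1 (Psi prog (u, v)).1 /\
  leL (Psi prog (u, v)).2 (Psi prog (x, y)).2.
Proof.
move=> xu vy; split=> q; apply: bigcup_seq_subset => r;
  apply: bigcap_seq_subset => l;
  by case: (lit_pair_precision_monotone l xu vy).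
Qed.

Lemma lit_pair_diag (A : D -> Lp P) (l : literal P D) :
  lit_pair (A, A) l = (lit1 A l, lit1 A l).
Proof. by case: l => [[] [p|d]]. Qed.

Lemma Psi_diag (A : D -> Lp P) :
  (Psi prog (A, A)).1 =1 TP prog A /\ (Psi prog (A, A)).2 =1 TP prog A.
Proof.
by split=> q; apply: eq_bigr => r _;
  apply: eq_bigr => l _; rewrite lit_pair_diag.
Qed.

Lemma Psi_approximator : approximator (@leL P D) (Psi prog) (TP prog).
Proof.
split; first exact: Psi_precision_monotone.
by move=> A; have [diag1 diag2] := Psi_diag A; split=> q;
  rewrite ?diag1 ?diag2.
Qed.

Lemma mem_lit_pair (I : {ffun P -> bool}) (S : (D -> Lp P) * (D -> Lp P))
    (l : literal P D) :
  (I \in (lit_pair S l).1) = (litI I (piI2 I S) l).1 /\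
  (I \in (lit_pair S l).2) = (litI I (piI2 I S) l).2.
Proof. by case: l => [[] [p|d]]; rewrite /lit_pair /litI /= ?inE. Qed.

Lemma PsiI_piI2 (I : {ffun P -> bool}) (S : (D -> Lp P) * (D -> Lp P)) :
  PsiI prog I (piI2 I S) = piI2 I (Psi prog S).
Proof.
congr pair; apply/setP => q; rewrite !inE mem_bigcup_seq;
  apply: eq_has => r; rewrite mem_bigcap_seq; congr andb;
  apply: eq_all => l; by case: (mem_lit_pair I S l).
Qed.

End ParametrisedProgram.

Theorem theorem4p9 (P D : finType) (prog : program P D) :
  approximator (@leL P D) (Psi prog) (TP prog) /\
  (forall (I : {ffun P -> bool}) (S : (D -> Lp P) * (D -> Lp P)),
      PsiI prog I (piI2 I S) = piI2 I (Psi prog S)).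
Proof.
split; first exact: Psi_approximator.
exact: PsiI_piI2.
Qed.
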